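(* Let $\vdash\subseteq Sqt$ satisfy (A), (Mon), (Cut), (Com), ($\bot$), ($\wedge$I), ($\wedge$E), ($\to$0), ($\to$1), ($\to$2). Then: (1) if $\vdash$ satisfies (Prop$^-$), $\mathfrak M^c_\vdash\in\mathcal D_{P-}$; (2) if $\vdash$ satisfies (Tran) and (Prop$_{tr}$), $\mathfrak M^c_\vdash\in\mathcal D_{\mathbf V}$; (3) if $\vdash$ satisfies (Sym1), (Sym2), (Prop$_{sy}$), $\mathfrak M^c_\vdash\in\mathcal D_{\mathbf B^p}$; (4) if $\vdash$ satisfies (Refl), (Sym1), (Sym2), (Prop$_{sy}$), $\mathfrak M^c_\vdash\in\mathcal D_{\mathbf O}$; (5) if $\vdash$ satisfies (Tran), (Sym1), (Sym2), (Prop$_{tr}$), $\mathfrak M^c_\vdash\in\mathcal D_{\mathbf{KB4}^p}$; (6) if $\vdash$ satisfies (Refl), (Tran), (Prop$_{tr}$), $\mathfrak M^c_\vdash\in\mathcal D_{\mathbf I}$; (7) if $\vdash$ satisfies (Refl), (Sym1), (Sym2), (Tran), (Prop$_{tr}$), $\mathfrak M^c_\vdash\in\mathcal D_{\mathbf C}$.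
   Context: $Form$: $\varphi::=p\mid\bot\mid(\varphi\wedge\varphi)\mid(\varphi\to\varphi)$ over a countable set $P0$ ($\wedge$ left-associative, binds tighter than $\to$). A model is $(W,R,V)$, $W\neq\emptyset$, $R\subseteq W\times W$, $V:P0\to\wp(W)$. For $X\subseteq W$: $-X=W\setminus X$, $R[X]=\{t:\exists s\in X,\ sRt\}$, $R^\Box(X)=\{s:\forall t\,(sRt\Rightarrow t\in X)\}$. A proposition of $(W,R)$ is $X\subseteq W$ with $R[X]\cap R^\Box(R[X])\subseteq X$; an interpretation is a model with every $V(p)$ a proposition. $\mathcal D_{P-}$: models with $V(p)\subseteq R^\Box(-R^\Box(\emptyset)\cup V(p))$ for all $p$; $\mathcal D_{\mathbf B^p}$, $\mathcal D_{\mathbf V}$, $\mathcal D_{\mathbf{KB4}^p}$, $\mathcal D_{\mathbf I}$, $\mathcal D_{\mathbf O}$, $\mathcal D_{\mathbf C}$: interpretations whose relation is respectively symmetric; transitive; symmetric and transitive; reflexive and transitive; reflexive and symmetric; reflexive, symmetric and transitive. Sequents: $(\Gamma,\varphi)$ with $\Gamma\subseteq Form$; $\Gamma\vdash\varphi$ means $(\Gamma,\varphi)\in\vdash$; $\psi\vdash\varphi$ means $\{\psi\}\vdash\varphi$; $\vdash\varphi$ means $\emptyset\vdash\varphi$. Rules (all $\Gamma,\Delta\subseteq Form$, $p\in P0$, formulas): (A) $\Gamma\cup\{\varphi\}\vdash\varphi$; (Mon) $\Gamma\subseteq\Delta$, $\Gamma\vdash\varphi\Rightarrow\Delta\vdash\varphi$;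 (Cut) $\Gamma\cup\{\psi\}\vdash\varphi$, $\Delta\vdash\psi\Rightarrow\Gamma\cup\Delta\vdash\varphi$; (Com) $\Gamma\vdash\varphi\Rightarrow\Gamma'\vdash\varphi$ for a finite $\Gamma'\subseteq\Gamma$; ($\bot$) $\bot\vdash\varphi$; ($\wedge$I) $\{\varphi,\psi\}\vdash\varphi\wedge\psi$; ($\wedge$E) $\varphi\wedge\psi\vdash\varphi$, $\varphi\wedge\psi\vdash\psi$; ($\to$0) $\vdash\varphi\to\varphi$; ($\to$1) $\Gamma\vdash\varphi\Rightarrow\{\psi\to\chi:\chi\in\Gamma\}\vdash\psi\to\varphi$; ($\to$2) $\{\varphi\to\psi,\psi\to\chi\}\vdash\varphi\to\chi$; (Refl) $\{\varphi,\varphi\to\psi\}\vdash\psi$; (Tran) $\varphi\to\psi\vdash(\bot\to\bot)\to(\varphi\to\psi)$; (Sym1) $\Gamma\cup\{\psi\}\vdash\chi$ and $\Gamma\cup\{(\varphi\to\psi)\to\bot\}\vdash\chi\Rightarrow\Gamma\cup\{\varphi\}\vdash\chi$; (Sym2) $\{\alpha\wedge\psi\to\chi,\alpha\wedge((\varphi\to\psi)\to\bot)\to\chi\}\vdash\alpha\wedge\varphi\to\chi$; (Prop$^-$) $p\vdash((\bot\to\bot)\to\bot)\to p$; (Prop$_{tr}$) $p\vdash(\bot\to\bot)\to p$; (Prop$_{sy}$) $p\vdash((p\to\bot)\to\bot)\to p$. $\Gamma$ is $\vdash$-consistent iff $\Gamma\nvdash\varphi$ for some $\varphi$; $\vdash$-deduction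 closed iff $\Gamma\vdash\psi\Rightarrow\psi\in\Gamma$. For $n\ge2$, $\vdash$ satisfies $(\alpha,\{\beta_1,\dots,\beta_n\})$ iff (i) for all $\Gamma,\varphi$: if $\Gamma\cup\{\beta_i\}\vdash\varphi$ for all $i$ then $\Gamma\cup\{\alpha\}\vdash\varphi$, and (ii) for all $\varphi,\psi_1,\dots,\psi_n$: $\{\psi_i\wedge\beta_i\to\varphi:1\le i\le n\}\vdash\psi_1\wedge\dots\wedge\psi_n\wedge\alpha\to\varphi$. $\Gamma$ is $\vdash$-prime iff whenever $\vdash$ satisfies $(\alpha,\{\beta_1,\dots,\beta_n\})$ ($n\ge2$) and $\alpha\in\Gamma$, some $\beta_i\in\Gamma$. $\Gamma R_\to\Delta$ iff $\varphi\to\psi\in\Gamma$ and $\varphi\in\Delta$ imply $\psi\in\Delta$. Canonical model $\mathfrak M^c_\vdash=(W^c_\vdash,R^c_\vdash,V^c_\vdash)$: $W^c_\vdash$ the set of $\vdash$-consistent, deduction closed, prime subsets of $Form$; $R^c_\vdash=R_\to\cap(W^c_\vdash\times W^c_\vdash)$; $V^c_\vdash(p)=\{\Gamma\in W^c_\vdash:p\in\Gamma\}$. *)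

From Stdlib Require Import List.
Import ListNotations.

Inductive Form : Type :=
| Var : nat -> Form
| Bot : Form
| And : Form -> Form -> Form
| Imp : Form -> Form -> Form.

Definition FSet := Form -> Prop.
Definition Sqt := FSet -> Form -> Prop.

Definition sempty : FSet := fun _ => False.
Definition sing (a : Form) : FSet := fun x => x = a.
Definition pair (a b : Form) : FSet := fun x => x = a \/ x = b.
Definition sadd (G : FSet) (a : Form) : FSet := fun x => G x \/ x = a.
Definition sunion (G D : FSet) : FSet := fun x => G x \/ D x.
Definition ssub (G D : FSet) : Prop := forall x, G x -> D x.

Definition Top : Form := Imp Bot Bot.
Definition Neg (a : Form) : Form := Imp a Bot.

Section Rules.
Variable vd : Sqt.

Definition rA := forall G a, vd (sadd G a) a.
Definition rMon := forall G D a, ssub G D -> vd G a -> vd D a.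
Definition rCut := forall G D psi phi,
  vd (sadd G psi) phi -> vd D psi -> vd (sunion G D) phi.
Definition rCom := forall G phi, vd G phi ->
  exists l : list Form, (forall x, In x l -> G x) /\ vd (fun x => In x l) phi.
Definition rBot := forall phi, vd (sing Bot) phi.
Definition rAndI := forall phi psi, vd (pair phi psi) (And phi psi).
Definition rAndE := forall phi psi,
  vd (sing (And phi psi)) phi /\ vd (sing (And phi psi)) psi.
Definition rImp0 := forall phi, vd sempty (Imp phi phi).
Definition rImp1 := forall G phi psi, vd G phi ->
  vd (fun x => exists chi, G chi /\ x = Imp psi chi) (Imp psi phi).
Definition rImp2 := forall phi psi chi,
  vd (pair (Imp phi psi) (Imp psi chi)) (Imp phi chi).
Definition rRefl := forall phi psi, vd (pair phi (Imp phi psi)) psi.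
Definition rTran := forall phi psi,
  vd (sing (Imp phi psi)) (Imp Top (Imp phi psi)).
Definition rSym1 := forall G phi psi chi,
  vd (sadd G psi) chi -> vd (sadd G (Neg (Imp phi psi))) chi ->
  vd (sadd G phi) chi.
Definition rSym2 := forall alpha phi psi chi,
  vd (pair (Imp (And alpha psi) chi) (Imp (And alpha (Neg (Imp phi psi))) chi))
     (Imp (And alpha phi) chi).
Definition rPropMinus := forall p : nat,
  vd (sing (Var p)) (Imp (Neg Top) (Var p)).
Definition rPropTr := forall p : nat,
  vd (sing (Var p)) (Imp Top (Var p)).
Definition rPropSy := forall p : nat,
  vd (sing (Var p)) (Imp (Neg (Neg (Var p))) (Var p)).

Definition bigAnd (l : list Form) : Form :=
  match l with
  | [] => Top (* unused: only applied to lists of length >= 2 *)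
  | a :: r => fold_left And r a
  end.

Definition satisfies_pair (alpha : Form) (bs : list Form) : Prop :=
  2 <= length bs /\
  (forall G phi, (forall b, In b bs -> vd (sadd G b) phi) -> vd (sadd G alpha) phi) /\
  (forall phi (ps : list Form), length ps = length bs ->
     vd (fun x => exists i, i < length bs /\
            x = Imp (And (nth i ps Bot) (nth i bs Bot)) phi)
        (Imp (And (bigAnd ps) alpha) phi)).

Definition consistent (G : FSet) := exists phi, ~ vd G phi.
Definition ded_closed (G : FSet) := forall psi, vd G psi -> G psi.
Definition prime (G : FSet) := forall alpha bs,
  satisfies_pair alpha bs -> G alpha -> exists b, In b bs /\ G b.

Definition isWc (G : FSet) := consistent G /\ ded_closed G /\ prime G.

Definition Wc : Type := { G : FSet | isWc G }.
Definition Rto (G D : FSet) : Prop :=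
  forall phi psi, G (Imp phi psi) -> D phi -> D psi.
Definition Rc (x y : Wc) : Prop := Rto (proj1_sig x) (proj1_sig y).
Definition Vc (p : nat) (x : Wc) : Prop := proj1_sig x (Var p).

End Rules.

Section Models.
Variables (W : Type) (R : W -> W -> Prop) (V : nat -> W -> Prop).

Definition img (X : W -> Prop) : W -> Prop := fun t => exists s, X s /\ R s t.
Definition box (X : W -> Prop) : W -> Prop := fun s => forall t, R s t -> X t.

Definition is_proposition (X : W -> Prop) : Prop :=
  forall t, img X t -> box (img X) t -> X t.
Definition interpretation : Prop := forall p, is_proposition (V p).

Definition r_refl := forall x, R x x.
Definition r_sym := forall x y, R x y -> R y x.
Definition r_trans := forall x y z, R x y -> R y z -> R x z.

Definition D_Pminus : Prop :=
  forall p w, V p w -> box (fun t => ~ box (fun _ => False) t \/ V p t) w.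
Definition D_Bp : Prop := interpretation /\ r_sym.
Definition D_V : Prop := interpretation /\ r_trans.
Definition D_KB4p : Prop := interpretation /\ r_sym /\ r_trans.
Definition D_I : Prop := interpretation /\ r_refl /\ r_trans.
Definition D_O : Prop := interpretation /\ r_refl /\ r_sym.
Definition D_C : Prop := interpretation /\ r_refl /\ r_sym /\ r_trans.
End Models.

Definition basic_rules (vd : Sqt) : Prop :=
  rA vd /\ rMon vd /\ rCut vd /\ rCom vd /\ rBot vd /\ rAndI vd /\
  rAndE vd /\ rImp0 vd /\ rImp1 vd /\ rImp2 vd.

(* The key
   fact is a prime-extension lemma: if [a -> b] is not in a deductively closed theory [G],
   enumerate the formulas and keep each one that preserves "no consequence [X] has [X -> b] in
   [G]"; the limit is a world [D] with [G R D], [a] in [D] and [b] not in [D].  Hence a theory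
   contains [a -> b] as soon as every successor world containing [a] contains [b].  With this,
   (Refl) and (Tran) give reflexivity and transitivity directly, (Sym1)+(Sym2) make every world
   prime for the split [a | ~(a -> b)], which yields symmetry, and the (Prop) rules give the
   required closure of the valuation. *)

From Stdlib Require Import List Classical Lia Cantor.
Import ListNotations.

Lemma list_choice {A B : Type} (da : A) (db : B) (P : A -> B -> Prop) (bs : list B) :
  (forall b, In b bs -> exists y, P y b) ->
  exists ys, length ys = length bs /\
    forall i, i < length bs -> P (nth i ys da) (nth i bs db).
Proof.
  induction bs as [|b bs IH]; intros H.
  - exists []; split; [reflexivity | cbn; lia].
  - destruct IH as [ys [Hlen Hys]]; [intros; apply H; now right|].
    destruct (H b (or_introl eq_refl)) as [y Hy].
    exists (y :: ys); split; [cbn; congruence|].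
    intros [|i] Hi; [exact Hy | apply Hys; cbn in Hi; lia].
Qed.

Fixpoint enc (f : Form) : nat :=
  match f with
  | Var n => to_nat (0, n)
  | Bot => to_nat (1, 0)
  | And a b => to_nat (2, to_nat (enc a, enc b))
  | Imp a b => to_nat (3, to_nat (enc a, enc b))
  end.

Lemma to_nat_inj p q : to_nat p = to_nat q -> p = q.
Proof. intro H. now rewrite <- (cancel_of_to p), H, cancel_of_to. Qed.

Lemma enc_inj f g : enc f = enc g -> f = g.
Proof.
  revert g; induction f as [n| |a IHa b IHb|a IHa b IHb]; intros [m| |c d|c d] H;
    cbn [enc] in H; apply to_nat_inj in H; try discriminate; try reflexivity.
  - now apply pair_equal_spec in H as [_ ->].
  - apply pair_equal_spec in H as [_ H].
    apply to_nat_inj, pair_equal_spec in H as [Hac Hbd]; f_equal; auto.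
  - apply pair_equal_spec in H as [_ H].
    apply to_nat_inj, pair_equal_spec in H as [Hac Hbd]; f_equal; auto.
Qed.

Section CanonicalModel.
Variable vd : Sqt.
Hypotheses (HA : rA vd) (HMon : rMon vd) (HCut : rCut vd) (HCom : rCom vd)
  (HBot : rBot vd) (HAndI : rAndI vd) (HAndE : rAndE vd) (HImp0 : rImp0 vd)
  (HImp1 : rImp1 vd) (HImp2 : rImp2 vd).

Lemma derive_mem G a : G a -> vd G a.
Proof.
  intro Ha. apply (HMon (sadd G a)); [|apply HA]. now intros x [Hx| ->].
Qed.

Lemma derive_cut G a b : vd (sadd G a) b -> vd G a -> vd G b.
Proof.
  intros Hb Ha. apply (HMon (sunion G G)); [now intros x [|]|]. eapply HCut; eauto.
Qed.

Lemma derive_cut_list D l a : (forall x, In x l -> vd D x) ->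
  vd (fun x => D x \/ In x l) a -> vd D a.
Proof.
  revert a; induction l as [|c l IH]; intros a Hl Ha.
  - refine (HMon _ _ _ _ Ha). now intros x [Hx|[]].
  - apply IH; [intros; apply Hl; now right|].
    apply (derive_cut _ c).
    + refine (HMon _ _ _ _ Ha). intros x [Hx|[<-|Hx]]; [left; now left|now right|left; now right].
    + apply (HMon D); [intros x Hx; now left | apply Hl; now left].
Qed.

Lemma derive_compose G D a : vd G a -> (forall x, G x -> vd D x) -> vd D a.
Proof.
  intros Ha HD. destruct (HCom _ _ Ha) as [l [Hl Hla]].
  apply (derive_cut_list D l); [auto|].
  refine (HMon _ _ _ _ Hla). now right.
Qed.

Lemma derive_of_empty G a : vd sempty a -> vd G a.
Proof. apply HMon. intros x []. Qed.

Lemma derive_sing a b G : vd (sing a) b -> vd G a -> vd G b.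
Proof. intros Hb Ha. apply (derive_compose _ _ _ Hb). now intros x ->. Qed.

Lemma derive_pair a b c G : vd (pair a b) c -> vd G a -> vd G b -> vd G c.
Proof. intros Hc Ha Hb. apply (derive_compose _ _ _ Hc). now intros x [-> | ->]. Qed.

Lemma derive_And G a b : vd G a -> vd G b -> vd G (And a b).
Proof. apply derive_pair, HAndI. Qed.

Lemma derive_And_l G a b : vd G (And a b) -> vd G a.
Proof. apply derive_sing, HAndE. Qed.

Lemma derive_And_r G a b : vd G (And a b) -> vd G b.
Proof. apply derive_sing, HAndE. Qed.

Lemma derive_Imp_trans G a b c : vd G (Imp a b) -> vd G (Imp b c) -> vd G (Imp a c).
Proof. apply derive_pair, HImp2. Qed.

Lemma derive_Imp_lift S D c a :
  vd S a -> (forall x, S x -> vd D (Imp c x)) -> vd D (Imp c a).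
Proof.
  intros Ha HS. apply (derive_compose _ _ _ (HImp1 _ _ c Ha)).
  intros x [y [Hy ->]]. auto.
Qed.

Lemma derive_Imp_of_sing a b : vd (sing a) b -> vd sempty (Imp a b).
Proof. intro Hb. apply (derive_Imp_lift _ _ _ _ Hb). intros x ->. apply HImp0. Qed.

Lemma derive_Top G : vd G Top.
Proof. apply derive_of_empty, HImp0. Qed.

Lemma derive_bigAnd G ps : (forall x, In x ps -> vd G x) -> vd G (bigAnd ps).
Proof.
  destruct ps as [|a r]; intros H; [apply derive_Top|cbn].
  assert (Ha : vd G a) by (apply H; now left).
  assert (Hr : forall x, In x r -> vd G x) by (intros; apply H; now right).
  clear H; revert a Ha; induction r as [|c r IH]; intros a Ha; [exact Ha|cbn].
  apply IH; [intros; apply Hr; now right|].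
  apply derive_And; [exact Ha | apply Hr; now left].
Qed.

Section PrimeExtension.
Variables (G : FSet) (b : Form).
Hypothesis G_closed : ded_closed vd G.

Definition avoids (D : FSet) := forall X, vd D X -> ~ G (Imp X b).

Lemma avoids_sub D D' : ssub D D' -> avoids D' -> avoids D.
Proof. intros Hs HD' X HX. apply HD'. eapply HMon; eauto. Qed.

Lemma conj_bound_list D c l : (forall x, In x l -> sadd D c x) ->
  exists Y, vd D Y /\ forall x, In x l -> vd sempty (Imp (And Y c) x).
Proof.
  induction l as [|x l IH]; intros Hl.
  - exists Top; split; [apply derive_Top | intros ? []].
  - destruct IH as [Y [HY HYl]]; [intros; apply Hl; now right|].
    destruct (Hl x (or_introl eq_refl)) as [Hx| ->].
    + exists (And Y x); split; [apply derive_And; [exact HY | now apply derive_mem]|].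
      intros x' [<-|Hx'].
      * apply derive_Imp_of_sing, (derive_And_r _ Y), (derive_And_l _ _ c), derive_mem.
        reflexivity.
      * apply derive_Imp_trans with (And Y c); [|now apply HYl].
        apply derive_Imp_of_sing, derive_And.
        -- apply (derive_And_l _ _ x), (derive_And_l _ _ c), derive_mem; reflexivity.
        -- apply (derive_And_r _ (And Y x)), derive_mem; reflexivity.
    + exists Y; split; [exact HY|].
      intros x' [<-|Hx']; [|now apply HYl].
      apply derive_Imp_of_sing, (derive_And_r _ Y), derive_mem; reflexivity.
Qed.

Lemma not_avoids_sadd D c : ~ avoids (sadd D c) ->
  exists Y, vd D Y /\ G (Imp (And Y c) b).
Proof.
  intro Hn. apply NNPP; intro Hno. apply Hn. intros X HX HXb.
  destruct (HCom _ _ HX) as [l [Hl Hlx]].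
  destruct (conj_bound_list D c l Hl) as [Y [HY HYl]].
  apply Hno. exists Y; split; [exact HY|]. apply G_closed.
  apply derive_Imp_trans with X; [|now apply derive_mem].
  apply (derive_Imp_lift _ _ _ _ Hlx). intros; now apply derive_of_empty, HYl.
Qed.

Section Maximal.
Variable D : FSet.
Hypotheses (D_avoids : avoids D) (D_max : forall c, avoids (sadd D c) -> D c).

Lemma maximal_avoids_Rto : Rto G D.
Proof.
  intros a c Hac Ha. apply NNPP; intro Hc.
  destruct (not_avoids_sadd D c) as [Y [HY HYc]]; [intro; now apply Hc, D_max|].
  apply (D_avoids (And Y a)); [apply derive_And; [exact HY | now apply derive_mem]|].
  apply G_closed, derive_Imp_trans with (And Y c); [|now apply derive_mem].
  apply (derive_Imp_lift (pair Y c)); [apply HAndI|].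
  intros x [-> | ->].
  - apply derive_of_empty, derive_Imp_of_sing, (derive_And_l _ _ a), derive_mem.
    reflexivity.
  - apply derive_Imp_trans with a; [|now apply derive_mem].
    apply derive_of_empty, derive_Imp_of_sing, (derive_And_r _ Y), derive_mem.
    reflexivity.
Qed.

Lemma maximal_avoids_consistent : consistent vd D.
Proof.
  exists b; intro Hb. apply (D_avoids b Hb), G_closed, derive_of_empty, HImp0.
Qed.

Lemma maximal_avoids_ded_closed : ded_closed vd D.
Proof.
  intros c Hc. apply D_max. intros X HX. apply D_avoids. eapply derive_cut; eauto.
Qed.

(* If no [beta_i] were in [D], each fails with some [psi_i]; conjoining the [psi_i] with
   [alpha] then contradicts [D_avoids] by clause (ii) of [satisfies_pair]. *)
Lemma maximal_avoids_prime : prime vd D.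
Proof.
  intros alpha bs [_ [_ Hsat]] Halpha. apply NNPP; intro Hno.
  assert (Hbad : forall beta, In beta bs ->
            exists Y, vd D Y /\ G (Imp (And Y beta) b)).
  { intros beta Hbeta. apply not_avoids_sadd. intro Hav. apply Hno.
    exists beta; split; [exact Hbeta | now apply D_max]. }
  destruct (list_choice Bot Bot (fun Y beta => vd D Y /\ G (Imp (And Y beta) b)) bs Hbad)
    as [ps [Hlen Hps]].
  apply (D_avoids (And (bigAnd ps) alpha)).
  - apply derive_And; [|now apply derive_mem].
    apply derive_bigAnd. intros x Hx.
    destruct (In_nth _ _ Bot Hx) as [i [Hi <-]]. apply Hps. lia.
  - apply G_closed, (derive_compose _ _ _ (Hsat b ps Hlen)).
    intros x [i [Hi ->]]. apply derive_mem, Hps, Hi.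
Qed.

End Maximal.

Section Enumeration.
Variable D0 : FSet.
Hypothesis D0_avoids : avoids D0.

Fixpoint stage (n : nat) : FSet :=
  match n with
  | 0 => D0
  | S n => fun x => stage n x \/ (enc x = n /\ avoids (sadd (stage n) x))
  end.

Definition stage_limit : FSet := fun x => exists n, stage n x.

Lemma stage_avoids n : avoids (stage n).
Proof.
  induction n as [|n IH]; [exact D0_avoids|].
  destruct (classic (exists x, enc x = n /\ avoids (sadd (stage n) x)))
    as [[x [Hx Hav]]|Hno].
  - apply (avoids_sub _ (sadd (stage n) x)); [|exact Hav].
    intros y [Hy|[Hy _]]; [now left | right; apply enc_inj; congruence].
  - apply (avoids_sub _ (stage n)); [|exact IH].
    intros y [Hy|Hy]; [exact Hy | exfalso; apply Hno; now exists y].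
Qed.

Lemma stage_mono n m : n <= m -> ssub (stage n) (stage m).
Proof. induction 1; intros x Hx; [exact Hx | left; auto]. Qed.

Lemma stage_limit_finite l : (forall x, In x l -> stage_limit x) ->
  exists N, forall x, In x l -> stage N x.
Proof.
  induction l as [|c l IH]; intros H; [exists 0; intros ? []|].
  destruct IH as [N HN]; [intros; apply H; now right|].
  destruct (H c (or_introl eq_refl)) as [k Hk].
  exists (N + k). intros x [<-|Hx].
  - apply (stage_mono k); [lia | exact Hk].
  - apply (stage_mono N); [lia | auto].
Qed.

Lemma stage_limit_avoids : avoids stage_limit.
Proof.
  intros X HX. destruct (HCom _ _ HX) as [l [Hl Hlx]].
  destruct (stage_limit_finite l Hl) as [N HN].
  apply (stage_avoids N). eapply HMon; [|exact Hlx]. exact HN.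
Qed.

Lemma stage_limit_max c : avoids (sadd stage_limit c) -> stage_limit c.
Proof.
  intro Hc. exists (S (enc c)). right; split; [reflexivity|].
  apply (avoids_sub _ (sadd stage_limit c)); [|exact Hc].
  intros x [Hx| ->]; [left; now exists (enc c) | now right].
Qed.

End Enumeration.

Lemma prime_extension a : ~ G (Imp a b) ->
  exists D : Wc vd, Rto G (proj1_sig D) /\ proj1_sig D a /\ ~ proj1_sig D b.
Proof.
  intro Hab.
  assert (Ha : avoids (sing a)).
  { intros X HX HXb. apply Hab, G_closed, derive_Imp_trans with X.
    - now apply derive_of_empty, derive_Imp_of_sing.
    - now apply derive_mem. }
  set (L := stage_limit (sing a)).
  assert (L_avoids : avoids L) by now apply stage_limit_avoids.
  assert (L_max : forall c, avoids (sadd L c) -> L c) by apply stage_limit_max.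
  assert (L_world : isWc vd L).
  { split; [|split].
    - now apply maximal_avoids_consistent.
    - now apply maximal_avoids_ded_closed.
    - now apply maximal_avoids_prime. }
  exists (exist _ L L_world); cbn; split; [|split].
  - now apply maximal_avoids_Rto.
  - now exists 0.
  - intro Hb. apply (L_avoids b (derive_mem _ _ Hb)), G_closed, derive_of_empty, HImp0.
Qed.

End PrimeExtension.

Lemma Imp_mem_of_successors G a b : ded_closed vd G ->
  (forall D : Wc vd, Rto G (proj1_sig D) -> proj1_sig D a -> proj1_sig D b) ->
  G (Imp a b).
Proof.
  intros HG Hsucc. apply NNPP; intro Hab.
  destruct (prime_extension G b HG a Hab) as [D [HGD [Ha Hb]]].
  exact (Hb (Hsucc D HGD Ha)).
Qed.

Lemma world_ded_closed (w : Wc vd) a : vd (proj1_sig w) a -> proj1_sig w a.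
Proof. apply (proj2_sig w). Qed.

Lemma world_not_Bot (w : Wc vd) : ~ proj1_sig w Bot.
Proof.
  destruct (proj1 (proj2_sig w)) as [c Hc]; intro HBw.
  apply Hc, (derive_sing Bot); [apply HBot | now apply derive_mem].
Qed.

Lemma world_sing (w : Wc vd) a b : vd (sing a) b -> proj1_sig w a -> proj1_sig w b.
Proof.
  intros Hb Ha. apply world_ded_closed, (derive_sing a); [exact Hb | now apply derive_mem].
Qed.

Lemma world_Top (w : Wc vd) : proj1_sig w Top.
Proof. apply world_ded_closed, derive_Top. Qed.

Lemma Rc_refl : rRefl vd -> r_refl (Wc vd) (Rc vd).
Proof.
  intros HRefl w a b Hab Ha. apply world_ded_closed, (derive_pair a (Imp a b));
    [apply HRefl | now apply derive_mem | now apply derive_mem].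
Qed.

Lemma Rc_trans : rTran vd -> r_trans (Wc vd) (Rc vd).
Proof.
  intros HTran x y z Hxy Hyz a b Hab Ha. apply (Hyz a); [|exact Ha].
  apply (Hxy Top); [|apply world_Top]. exact (world_sing x _ _ (HTran a b) Hab).
Qed.

Lemma satisfies_pair_Sym a b : rSym1 vd -> rSym2 vd ->
  satisfies_pair vd a [b; Neg (Imp a b)].
Proof.
  intros HSym1 HSym2. split; [cbn; lia|split].
  - intros G c Hc. apply (HSym1 G a b); apply Hc; cbn; auto.
  - intros c ps Hlen. destruct ps as [|p1 [|p2 [|p3 ps]]]; try discriminate; cbn.
    set (S := fun x => exists i, i < 2 /\
      x = Imp (And (nth i [p1; p2] Bot) (nth i [b; Neg (Imp a b)] Bot)) c).
    assert (Hmem : forall i, i < 2 ->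
      vd S (Imp (And (nth i [p1; p2] Bot) (nth i [b; Neg (Imp a b)] Bot)) c))
      by (intros i Hi; apply derive_mem; now exists i).
    assert (Hweaken : forall p q, vd (sing (And p1 p2)) p ->
      vd S (Imp (And p q) c) -> vd S (Imp (And (And p1 p2) q) c)).
    { intros p q Hp Hpq. apply derive_Imp_trans with (And p q); [|exact Hpq].
      apply derive_of_empty, derive_Imp_of_sing, derive_And.
      - apply (derive_sing (And p1 p2)); [exact Hp|].
        apply (derive_And_l _ _ q), derive_mem; reflexivity.
      - apply (derive_And_r _ (And p1 p2)), derive_mem; reflexivity. }
    apply (derive_pair _ _ _ _ (HSym2 (And p1 p2) a b c)).
    + apply (Hweaken p1); [apply HAndE | apply (Hmem 0); lia].
    + apply (Hweaken p2); [apply HAndE | apply (Hmem 1); lia].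
Qed.

Lemma Rc_sym : rSym1 vd -> rSym2 vd -> r_sym (Wc vd) (Rc vd).
Proof.
  intros HSym1 HSym2 x y Hxy a b Hab Ha.
  destruct (proj2 (proj2 (proj2_sig x)) a _ (satisfies_pair_Sym a b HSym1 HSym2) Ha)
    as [c [Hc Hxc]].
  destruct Hc as [<-|[<-|[]]]; [exact Hxc|].
  exfalso. apply (world_not_Bot y), (Hxy (Imp a b)); [exact Hxc | exact Hab].
Qed.

Lemma interpretation_of_PropTr : rPropTr vd -> interpretation (Wc vd) (Rc vd) (Vc vd).
Proof.
  intros HProp p t [s [Hs Hst]] _.
  apply (Hst Top); [exact (world_sing s _ _ (HProp p) Hs) | apply world_Top].
Qed.

(* [t] contains [~~p]: every successor [D] of [t] is seen from a world [d] containing [p], so by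
   symmetry [d] is a successor of [D], and [~p] in [D] would put [Bot] in [d]. *)
Lemma interpretation_of_PropSy : rSym1 vd -> rSym2 vd -> rPropSy vd ->
  interpretation (Wc vd) (Rc vd) (Vc vd).
Proof.
  intros HSym1 HSym2 HProp p t [s [Hs Hst]] Hbox.
  apply (Hst (Neg (Neg (Var p)))); [exact (world_sing s _ _ (HProp p) Hs)|].
  apply (Imp_mem_of_successors _ (Neg (Var p)) Bot); [apply (proj2_sig t)|].
  intros D HtD HDnp. destruct (Hbox D HtD) as [d [Hd HdD]].
  exfalso. apply (world_not_Bot d), (Rc_sym HSym1 HSym2 _ _ HdD (Var p));
    [exact HDnp | exact Hd].
Qed.

Lemma D_Pminus_of_PropMinus : rPropMinus vd -> D_Pminus (Wc vd) (Rc vd) (Vc vd).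
Proof.
  intros HProp p w Hw t Hwt.
  destruct (classic (box (Wc vd) (Rc vd) (fun _ => False) t)) as [Hdead|Halive];
    [right | now left].
  apply (Hwt (Neg Top)); [exact (world_sing w _ _ (HProp p) Hw)|].
  apply (Imp_mem_of_successors _ Top Bot); [apply (proj2_sig t)|].
  intros D HtD. destruct (Hdead D HtD).
Qed.

End CanonicalModel.

Theorem mainTheorem14 (vd : Sqt) (Hbasic : basic_rules vd) :
  (rPropMinus vd -> D_Pminus (Wc vd) (Rc vd) (Vc vd)) /\
  (rTran vd -> rPropTr vd -> D_V (Wc vd) (Rc vd) (Vc vd)) /\
  (rSym1 vd -> rSym2 vd -> rPropSy vd -> D_Bp (Wc vd) (Rc vd) (Vc vd)) /\
  (rRefl vd -> rSym1 vd -> rSym2 vd -> rPropSy vd -> D_O (Wc vd) (Rc vd) (Vc vd)) /\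
  (rTran vd -> rSym1 vd -> rSym2 vd -> rPropTr vd -> D_KB4p (Wc vd) (Rc vd) (Vc vd)) /\
  (rRefl vd -> rTran vd -> rPropTr vd -> D_I (Wc vd) (Rc vd) (Vc vd)) /\
  (rRefl vd -> rSym1 vd -> rSym2 vd -> rTran vd -> rPropTr vd ->
     D_C (Wc vd) (Rc vd) (Vc vd)).
Proof.
  destruct Hbasic as (HA & HMon & HCut & HCom & HBot & HAndI & HAndE & HImp0 & HImp1 & HImp2).
  split; [|split; [|split; [|split; [|split; [|split]]]]]; intros.
  - now apply D_Pminus_of_PropMinus.
  - split; [apply interpretation_of_PropTr | apply Rc_trans]; auto.
  - split; [apply interpretation_of_PropSy | apply Rc_sym]; auto.
  - split; [apply interpretation_of_PropSy | split; [apply Rc_refl | apply Rc_sym]]; auto.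
  - split; [apply interpretation_of_PropTr | split; [apply Rc_sym | apply Rc_trans]]; auto.
  - split; [apply interpretation_of_PropTr | split; [apply Rc_refl | apply Rc_trans]]; auto.
  - split; [apply interpretation_of_PropTr |
            split; [apply Rc_refl | split; [apply Rc_sym | apply Rc_trans]]]; auto.
Qed.
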